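(* If $G$ is an optimal digraph and $(u,v)$ is a shortest non-edge of $G$, then $N^+(v) \cap N^-(u) \neq \emptyset$.
   Context: Digraphs are finite, loopless, with at most one edge $uv$ per ordered pair. $N^+(v)=\{u: vu\in E(G)\}$, $N^-(v)=\{u:uv\in E(G)\}$. A digraph is $2$-free if no distinct $u,v$ have both $uv,vu$ as edges. A circular interval digraph is a digraph together with a fixed arrangement of its vertices in a circle such that for all distinct $u,v,w$ in clockwise order with $uw\in E(G)$, also $uv,vw\in E(G)$. For distinct $u,v$, $d(u,v) = 1 + |\{w: u,w,v \text{ distinct, in clockwise order}\}|$; this is the length of the ordered pair $uv$. A non-edge is an ordered pair $(u,v)$ of distinct vertices with neither $uv$ nor $vu$ an edge; its length is $d(u,v)$. $\alpha_G$ is the minimum length of a non-edge ($\infty$ if none); a shortest non-edge is a non-edge of length $\alpha_G$. $\xi(G)$ is the number of pairs $(uv,(w,x))$ with $uv\in E(G)$, $(w,x)$ a non-edge, $d(u,v)>d(w,x)$. $\tilde P_3(G)$ is the number of triples $(a,b,c)$ of distinct vertices with $ab,bc\in E(G)$ and $ac,ca\notin E(G)$. For fixed $n\ge 4$, $G$ is optimal if it is a $2$-free circular interval digraph on $n$ vertices maximizing $\tilde P_3$ among all such digraphs and, subject to this, minimizing $\xi(G)$. *)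

From mathcomp Require Import all_boot.
Set Implicit Arguments. Unset Strict Implicit. Unset Printing Implicit Defensive.

(* Digraphs on the vertex set 'I_n; the fixed circular arrangement places
   vertex i at position i, clockwise order = increasing index modulo n.
   A digraph is given by its edge relation E : rel 'I_n. *)

(* d(u,v) = 1 + #{w : u,w,v distinct in clockwise order} = (v - u) mod n. *)
Definition cdist (n : nat) (u v : 'I_n) : nat := (v + n - u) %% n.

Definition cw (n : nat) (u v w : 'I_n) : bool :=
  [&& u != v, v != w, u != w & cdist u v < cdist u w].

Definition loopless (n : nat) (E : rel 'I_n) : Prop := forall u, ~~ E u u.

Definition two_free (n : nat) (E : rel 'I_n) : Prop :=
  forall u v, u != v -> ~~ (E u v && E v u).

Definition circ_interval (n : nat) (E : rel 'I_n) : Prop :=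
  forall u v w, cw u v w -> E u w -> E u v && E v w.

Definition valid_digraph (n : nat) (E : rel 'I_n) : Prop :=
  loopless E /\ two_free E /\ circ_interval E.

Definition nonedge (n : nat) (E : rel 'I_n) (u v : 'I_n) : bool :=
  [&& u != v, ~~ E u v & ~~ E v u].

Definition shortest_nonedge (n : nat) (E : rel 'I_n) (u v : 'I_n) : Prop :=
  nonedge E u v /\ forall w x, nonedge E w x -> cdist u v <= cdist w x.

Definition xi (n : nat) (E : rel 'I_n) : nat :=
  #|[set p : ('I_n * 'I_n) * ('I_n * 'I_n) |
      [&& E p.1.1 p.1.2, nonedge E p.2.1 p.2.2 &
          cdist p.2.1 p.2.2 < cdist p.1.1 p.1.2]]|.

Definition P3 (n : nat) (E : rel 'I_n) : nat :=
  #|[set t : 'I_n * 'I_n * 'I_n |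
      [&& t.1.1 != t.1.2, t.1.2 != t.2, t.1.1 != t.2,
          E t.1.1 t.1.2, E t.1.2 t.2, ~~ E t.1.1 t.2 & ~~ E t.2 t.1.1]]|.

Definition optimal (n : nat) (E : rel 'I_n) : Prop :=
  valid_digraph E /\
  (forall E' : rel 'I_n, valid_digraph E' -> P3 E' <= P3 E) /\
  (forall E' : rel 'I_n, valid_digraph E' -> P3 E' = P3 E -> xi E <= xi E').

(* Let (u, v) be a shortest non-edge, of length alpha, in an optimal digraph E
   and suppose there is no path v -> w -> u.  We add the edge u -> v and show
   that the result E' is again a valid 2-free circular interval digraph with
   strictly more induced 2-paths, contradicting optimality.
   - Validity: every w strictly between u and v is at distance < alpha from
     both, hence adjacent to both, and the interval property orients these
     edges as u -> w -> v.
   - Counting: an induced path destroyed by u -> v has the form u -> b -> v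
     with b inside the arc; reflecting b to the vertex as far after v gives a
     new induced path u -> v -> b'.  One more new path exists: z -> u -> v for
     the predecessor z of u when alpha >= 2, and u -> v -> c for an
     out-neighbour c of v when alpha = 1 (v is not isolated, since optimal
     digraphs have no isolated vertex). *)

From mathcomp Require Import all_boot zify.
Set Implicit Arguments. Unset Strict Implicit.

Section CircularDistance.
Variable n : nat.
Implicit Types x y z : 'I_n.

Lemma cdist_cases x y :
  (x <= y /\ cdist x y = y - x) \/ (y < x /\ cdist x y = y + n - x).
Proof.
have hx := ltn_ord x; have hy := ltn_ord y.
rewrite /cdist; case: (leqP x y) => h; [left|right]; split => //.
  have -> : y + n - x = (y - x) + n by lia.
  by rewrite modnDr modn_small //; lia.
by rewrite modn_small //; lia.
Qed.

Lemma cdist_lt x y : cdist x y < n.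
Proof. have := cdist_cases x y; have := ltn_ord x; have := ltn_ord y; lia. Qed.

Lemma cdist_gt0 x y : (0 < cdist x y) = (x != y).
Proof.
rewrite -val_eqE /=.
have := cdist_cases x y; have := ltn_ord x; have := ltn_ord y; lia.
Qed.

Lemma cdist_sym x y : x != y -> cdist x y + cdist y x = n.
Proof.
rewrite -val_eqE /=.
have := cdist_cases x y; have := cdist_cases y x.
have := ltn_ord x; have := ltn_ord y; lia.
Qed.

Lemma cdist_add x y z :
  cdist x y + cdist y z = cdist x z \/ cdist x y + cdist y z = cdist x z + n.
Proof.
have := cdist_cases x y; have := cdist_cases y z; have := cdist_cases x z.
have := ltn_ord x; have := ltn_ord y; have := ltn_ord z; lia.
Qed.

Lemma cdist_inj x : injective (cdist x).
Proof.
move=> y z e; apply: val_inj => /=; move: e.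
have := cdist_cases x y; have := cdist_cases x z.
have := ltn_ord x; have := ltn_ord y; have := ltn_ord z; lia.
Qed.

Lemma cwE x y z : cw x y z = (0 < cdist x y < cdist x z).
Proof.
rewrite /cw -!cdist_gt0.
apply/and4P/andP => [[-> _ _ ->]|[h1 h2]] //.
split => //; last exact: ltn_trans h1 h2.
by rewrite cdist_gt0; apply: contraTneq h2 => ->; rewrite ltnn.
Qed.

Lemma cw_rotate x y z : cw x y z -> cw y z x.
Proof.
rewrite !cwE => /andP [h1 h2].
have xy : x != y by rewrite -cdist_gt0.
have yz : y != z by apply: contraTneq h2 => ->; rewrite ltnn.
move: (yz); rewrite -cdist_gt0 => ->.
have := cdist_sym xy; have := cdist_add x y z.
have := cdist_lt x z; have := cdist_lt y z; lia.
Qed.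

Definition shift x (j : nat) : 'I_n :=
  Ordinal (ltn_pmod (x + j) (leq_ltn_trans (leq0n x) (ltn_ord x))).

Lemma cdist_shift x j : j < n -> cdist x (shift x j) = j.
Proof.
move=> hj; have hx := ltn_ord x.
have hs : nat_of_ord (shift x j) = if x + j < n then x + j else x + j - n.
  rewrite /=; case: ifP => h; first by rewrite modn_small.
  have hge : n <= x + j by rewrite leqNgt h.
  by rewrite -{1}(subnK hge) modnDr modn_small; lia.
have := cdist_cases x (shift x j); rewrite hs; case: ifP; lia.
Qed.

Lemma shift_cdist x y : shift x (cdist x y) = y.
Proof.
by apply: (@cdist_inj x); rewrite cdist_shift // cdist_lt.
Qed.

Lemma shift0 x : shift x 0 = x.
Proof. by apply: val_inj; rewrite /= addn0 modn_small. Qed.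

Lemma shiftS x k : shift (shift x k) 1 = shift x k.+1.
Proof. by apply: val_inj => /=; rewrite modnDml addn1 addnS. Qed.

Lemma cw_succ x w : 1 < n -> ~~ cw x w (shift x 1).
Proof. by move=> n1; rewrite cwE cdist_shift //; case: (cdist x w) => [|[]]. Qed.

End CircularDistance.

Section AddingAnEdge.
Variable n : nat.
Implicit Types (E : rel 'I_n) (x y a b c : 'I_n).

Definition is_P3 E (t : 'I_n * 'I_n * 'I_n) : bool :=
  [&& t.1.1 != t.1.2, t.1.2 != t.2, t.1.1 != t.2,
      E t.1.1 t.1.2, E t.1.2 t.2, ~~ E t.1.1 t.2 & ~~ E t.2 t.1.1].
Definition P3set E := [set t | is_P3 E t].

Lemma P3_lt E E' :
  #|P3set E :\: P3set E'| < #|P3set E' :\: P3set E| -> P3 E < P3 E'.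
Proof.
have := cardsID (P3set E') (P3set E); have := cardsID (P3set E) (P3set E').
by rewrite setIC /P3 -/(P3set E) -/(P3set E'); lia.
Qed.

Definition add_edge E x y : rel 'I_n := fun a b => E a b || (a == x) && (b == y).

Lemma add_edge_valid E x y :
  valid_digraph E -> x != y -> ~~ E y x ->
  (forall w, cw x w y -> E x w && E w y) -> valid_digraph (add_edge E x y).
Proof.
move=> [Hl [H2 Hc]] xy nEyx Hin; split; [|split].
- move=> a; rewrite /add_edge (negbTE (Hl a)) /=.
  by apply: contra xy => /andP [/eqP <- /eqP ->].
- move=> a b ab; rewrite /add_edge; apply/negP => /andP [].
  case/orP => [Eab|/andP [/eqP ax /eqP bx]]; case/orP => [Eba|/andP [/eqP bx' /eqP ay]].
  + by move: (H2 a b ab); rewrite Eab Eba.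
  + by subst; rewrite Eab in nEyx.
  + by subst; rewrite Eba in nEyx.
  + by subst; rewrite eqxx in ab.
- move=> a w c hcw; rewrite /add_edge => /orP [Eac|/andP [/eqP ax /eqP cy]].
    by case/andP: (Hc _ _ _ hcw Eac) => -> ->.
  by subst; case/andP: (Hin _ hcw) => -> ->.
Qed.

Lemma lost_P3 E x y t : t \in P3set E :\: P3set (add_edge E x y) ->
  ((t.1.1, t.2) = (x, y) \/ (t.1.1, t.2) = (y, x)) /\ E t.1.1 t.1.2 /\ E t.1.2 t.2.
Proof.
case: t => [[a b] c]; rewrite !inE /is_P3 /add_edge /=.
case/andP => hnew /and5P [h1 h2 h3 h4 /and3P [h5 h6 h7]].
move: hnew; rewrite h1 h2 h3 h4 h5 /= (negbTE h6) (negbTE h7) /= negb_and !negbK.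
by case/orP => /andP [/eqP -> /eqP ->]; split => //; [left|right].
Qed.

Lemma gained_P3 E E' a b c : a != b -> b != c -> a != c ->
  E' a b -> E' b c -> ~~ E' a c -> ~~ E' c a -> ~~ (E a b && E b c) ->
  (a, b, c) \in P3set E' :\: P3set E.
Proof.
move=> h1 h2 h3 h4 h5 h6 h7 h8; rewrite !inE /is_P3 /= h1 h2 h3 h4 h5 h6 h7 /= andbT.
by apply: contra h8 => /and4P [-> -> _ _].
Qed.

End AddingAnEdge.

Lemma card_lt_inj (T T' : finType) (A : {set T}) (B : {set T'}) (f : T -> T') g :
  {in A &, injective f} -> (forall t, t \in A -> f t \in B :\ g) -> g \in B ->
  #|A| < #|B|.
Proof.
move=> finj fAB gB; rewrite (cardsD1 g B) gB -(card_in_imset finj) ltnS.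
by apply: subset_leq_card; apply/subsetP => s /imsetP [t tA ->]; exact: fAB.
Qed.

Lemma optimal_P3_max n (E E' : rel 'I_n) :
  optimal E -> valid_digraph E' -> ~ P3 E < P3 E'.
Proof. by case=> _ [Hmax _] /Hmax; rewrite leqNgt => /negP. Qed.

Section Successor.
Variable n : nat.
Hypothesis n_gt1 : 1 < n.
Implicit Types x y c : 'I_n.

Lemma shift_neq x j : 0 < j < n -> x != shift x j.
Proof. by case/andP=> j0 jn; rewrite -cdist_gt0 cdist_shift. Qed.

Lemma cw_before_succ c x : c != x -> c != shift x 1 -> cw c x (shift x 1).
Proof.
move=> cx cx1; rewrite cwE cdist_gt0 cx /=.
have := cdist_add c x (shift x 1); rewrite cdist_shift //.
have := cdist_lt c (shift x 1); have := cdist_lt c x; rewrite -cdist_gt0 in cx1; lia.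
Qed.

Lemma add_succ_valid (E : rel 'I_n) x :
  valid_digraph E -> ~~ E (shift x 1) x -> valid_digraph (add_edge E x (shift x 1)).
Proof.
move=> HE nE; apply: add_edge_valid => //; first exact: shift_neq.
by move=> w; rewrite (negbTE (cw_succ _ _ n_gt1)).
Qed.

Lemma cyclic_switch (p : pred 'I_n) v a :
  p v -> ~~ p a -> exists y, p y && ~~ p (shift y 1).
Proof.
move=> pv npa; case: (pickP (fun y => p y && ~~ p (shift y 1))) => [y hy|none].
  by exists y.
suff pk k : p (shift v k) by move: (pk (cdist v a)); rewrite shift_cdist (negbTE npa).
elim: k => [|k IH]; first by rewrite shift0.
by move: (none (shift v k)); rewrite IH shiftS /= => /negbFE.
Qed.

End Successor.

Section IsolatedVertices.
Variable n : nat.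
Hypothesis n_ge3 : 2 < n.
Implicit Types (E : rel 'I_n) (x y : 'I_n).

Let n_gt1 : 1 < n. Proof. exact: ltnW. Qed.

Definition isolated E y : bool := [forall x, ~~ E y x && ~~ E x y].

Lemma isolatedP E y : isolated E y -> forall x, ~~ E y x /\ ~~ E x y.
Proof. by move/forallP=> iso x; apply/andP. Qed.

Lemma path_digraph x : exists E0 : rel 'I_n, valid_digraph E0 /\ 0 < P3 E0.
Proof.
set x1 := shift x 1; set x2 := shift x1 1.
have xx1 : x != x1 by apply: shift_neq.
have x1x2 : x1 != x2 by apply: shift_neq.
have xx2 : x != x2 by rewrite /x2 /x1 shiftS; apply: shift_neq.
set E1 := add_edge (fun _ _ => false) x x1.
exists (add_edge E1 x1 x2); split.
  apply: (add_succ_valid n_gt1); first exact: (add_succ_valid n_gt1).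
  by rewrite /E1 /add_edge /= eq_sym (negbTE xx2).
rewrite card_gt0; apply/set0Pn; exists (x, x1, x2).
by rewrite inE /is_P3 /E1 /add_edge /= !eqxx xx1 x1x2 xx2 (eq_sym x2) !(negbTE xx1, negbTE x1x2) !andbF.
Qed.

(* Since some valid digraph has an induced P3, an optimal one has an edge. *)
Lemma optimal_has_edge E x : optimal E -> exists a b, E a b.
Proof.
move=> Hopt; have [E0 [HE0 P0]] := path_digraph x.
have : 0 < P3 E.
  by rewrite ltnNge; apply/negP => le0; apply: (optimal_P3_max Hopt HE0); exact: leq_ltn_trans le0 P0.
rewrite card_gt0 => /set0Pn [t]; rewrite inE => /and5P [_ _ _ Et _].
by exists t.1.1, t.1.2.
Qed.

(* Optimal digraphs have no isolated vertex: otherwise some isolated y has a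
   non-isolated successor y+1, and the edge y -> y+1 creates an induced path
   y -> y+1 -> c while destroying none. *)
Lemma optimal_no_isolated E v : optimal E -> ~~ isolated E v.
Proof.
move=> Hopt; apply/negP => iso_v.
have HE := Hopt.1; have [Hl [_ Hc]] := HE.
have [a [b Eab]] := optimal_has_edge v Hopt.
have niso_a : ~~ isolated E a by apply/negP => /isolatedP/(_ b); rewrite Eab; case.
have [y /andP [iso_y niso_y1]] := cyclic_switch iso_v niso_a.
set y1 := shift y 1 in niso_y1.
have yy1 : y != y1 by apply: shift_neq.
have [Eyy1 Ey1y] := isolatedP iso_y y1.
have [c Ey1c] : exists c, E y1 c.
  move: niso_y1; rewrite negb_forall => /existsP [c]; rewrite negb_and !negbK.
  case/orP => [|Ecy1]; first by exists c.
  have cy : c != y by apply: contraTneq Ecy1 => ->.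
  have cy1 : c != y1 by apply: contraTneq Ecy1 => ->; rewrite (negbTE (Hl _)).
  have [Ecy _] := andP (Hc _ _ _ (cw_before_succ n_gt1 cy cy1) Ecy1).
  by have [_ /negP] := isolatedP iso_y c.
have [nEyc nEcy] := isolatedP iso_y c.
have cy : c != y by apply: contraTneq Ey1c => ->; rewrite (negbTE Ey1y).
have cy1 : c != y1 by apply: contraTneq Ey1c => ->; rewrite (negbTE (Hl _)).
apply: (optimal_P3_max Hopt (add_succ_valid n_gt1 HE Ey1y)); apply: P3_lt.
have no_lost : P3set E :\: P3set (add_edge E y y1) = set0.
  apply/eqP; rewrite -subset0; apply/subsetP => t /lost_P3 [[[e1 _]|[_ e2]] [h1 h2]].
    by have [/negP] := isolatedP iso_y t.1.2; rewrite -e1.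
  by have [_ /negP] := isolatedP iso_y t.1.2; rewrite -e2.
rewrite no_lost cards0 card_gt0; apply/set0Pn; exists (y, y1, c).
apply: gained_P3; rewrite // 1?eq_sym // /add_edge -/y1 ?eqxx ?Ey1c ?orbT //;
  by rewrite ?(negbTE nEyc, negbTE nEcy, negbTE cy, negbTE cy1, negbTE Eyy1).
Qed.

End IsolatedVertices.

Section ShortestNonedge.
Variable n : nat.
Variable E : rel 'I_n.
Variables u v : 'I_n.
Hypothesis HE : valid_digraph E.
Hypothesis Huv : shortest_nonedge E u v.

Local Notation alpha := (cdist u v).
Local Notation E' := (add_edge E u v).

Lemma uv_nonedge : [/\ u != v, ~~ E u v & ~~ E v u].
Proof. by apply/and3P; case: Huv. Qed.

Lemma short_adjacent x y : x != y -> cdist x y < alpha -> E x y || E y x.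
Proof.
move=> xy lt_xy; apply/negPn/negP => nadj.
have := Huv.2 x y; rewrite /nonedge xy -negb_or nadj => /(_ isT); lia.
Qed.

(* (v, u) is a non-edge too, so alpha is at most half the circle. *)
Lemma alpha_half : 0 < alpha /\ alpha + alpha <= n.
Proof.
have [uv nEuv nEvu] := uv_nonedge.
have back : alpha <= cdist v u by apply: Huv.2; rewrite /nonedge eq_sym uv nEvu nEuv.
by have := cdist_sym uv; rewrite cdist_gt0 uv; lia.
Qed.

(* Every vertex strictly between u and v is joined to both by the edges
   u -> w -> v, because both of its distances to them are below alpha. *)
Lemma inside_edges w : cw u w v -> E u w && E w v.
Proof.
have [_ [_ Hc]] := HE; have [uv nEuv nEvu] := uv_nonedge.
move=> cw_uwv; have := cw_uwv; rewrite cwE => /andP [uw_pos uw_lt].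
have wv : w != v by apply: contraTneq cw_uwv => ->; rewrite cwE ltnn andbF.
have uw : u != w by rewrite -cdist_gt0.
have wv_lt : cdist w v < alpha.
  by have := cdist_add u w v; have := cdist_lt w v; lia.
have /orP [Euw|Ewu] := short_adjacent uw uw_lt; last first.
  by have /andP [_ Evu] := Hc _ _ _ (cw_rotate cw_uwv) Ewu; rewrite Evu in nEvu.
have /orP [Ewv|Evw] := short_adjacent wv wv_lt; first by rewrite Euw Ewv.
by have /andP [Evu _] := Hc _ _ _ (cw_rotate (cw_rotate cw_uwv)) Evw; rewrite Evu in nEvu.
Qed.

Lemma add_uv_valid : valid_digraph E'.
Proof.
have [uv _ nEvu] := uv_nonedge.
exact: add_edge_valid HE uv nEvu inside_edges.
Qed.

Definition mirror (b : 'I_n) : 'I_n := shift v (cdist u b).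

Lemma mirror_inj : injective mirror.
Proof.
move=> b1 b2 /(congr1 (cdist v)); rewrite !cdist_shift ?cdist_lt //.
exact: cdist_inj.
Qed.

Section NoReturnPath.
(* The contrary of the theorem: no path v -> w -> u. *)
Hypothesis no_return : forall w, ~~ (E v w && E w u).

Lemma lost_shape t : t \in P3set E :\: P3set E' ->
  t = (u, t.1.2, v) /\ 0 < cdist u t.1.2 < alpha.
Proof.
have [Hl [_ Hc]] := HE; have [uv nEuv _] := uv_nonedge.
case: t => [[a b] c] /lost_P3 /= [[[-> ->]|[-> ->]] [Eab Ebc]]; last first.
  by have := no_return b; rewrite Eab Ebc.
split => //; rewrite cdist_gt0.
have ub : u != b by apply: contraTneq Eab => ->; rewrite (negbTE (Hl b)).
have bv : b != v by apply: contraTneq Ebc => ->; rewrite (negbTE (Hl v)).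
rewrite ub /=; case: ltngtP => // [gt|/cdist_inj eq_vb]; last by rewrite eq_vb eqxx in bv.
have cw_uvb : cw u v b by rewrite cwE gt andbT cdist_gt0.
by have /andP [Euv _] := Hc _ _ _ cw_uvb Eab; rewrite Euv in nEuv.
Qed.

Lemma gained_after c : cw u v c -> E v c -> (u, v, c) \in P3set E' :\: P3set E.
Proof.
have [_ [_ Hc]] := HE; have [uv nEuv _] := uv_nonedge.
move=> cw_uvc Evc; have := cw_uvc; case/and4P => _ vc uc _.
have nEuc : ~~ E u c by apply/negP => /(Hc _ _ _ cw_uvc) /andP [Euv _]; rewrite Euv in nEuv.
have nEcu : ~~ E c u by apply/negP => Ecu; have := no_return c; rewrite Evc Ecu.
apply: gained_P3; rewrite /add_edge ?eqxx ?Evc ?orbT ?(negbTE nEuv) //=.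
- by rewrite (negbTE nEuc) eq_sym (negbTE vc).
- by rewrite (negbTE nEcu) (negbTE uv) andbF.
Qed.

Lemma gained_before a : cw a u v -> E a u -> (a, u, v) \in P3set E' :\: P3set E.
Proof.
have [_ [_ Hc]] := HE; have [uv nEuv _] := uv_nonedge.
move=> cw_auv Eau; have := cw_auv; case/and4P => au _ av _.
have nEav : ~~ E a v by apply/negP => /(Hc _ _ _ cw_auv) /andP [_ Euv]; rewrite Euv in nEuv.
have nEva : ~~ E v a by apply/negP => Eva; have := no_return a; rewrite Eva Eau.
apply: gained_P3; rewrite /add_edge ?eqxx ?Eau ?orbT ?(negbTE nEuv) ?andbF //=.
- by rewrite (negbTE nEav) (negbTE au).
- by rewrite (negbTE nEva) eq_sym (negbTE uv).
Qed.

Lemma gained_mirror b : 0 < cdist u b < alpha ->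
  (u, v, mirror b) \in P3set E' :\: P3set E.
Proof.
have [_ [_ Hc]] := HE; have [uv nEuv _] := uv_nonedge; have [a_pos a_half] := alpha_half.
move=> /andP [b_pos b_lt]; set c := mirror b.
have vc_dist : cdist v c = cdist u b by rewrite cdist_shift // cdist_lt.
have cw_uvc : cw u v c.
  rewrite cwE a_pos /=; have := cdist_add u v c; have := cdist_lt u c; lia.
have vc : v != c by rewrite -cdist_gt0 vc_dist.
apply: gained_after => //.
have vc_lt : cdist v c < alpha by rewrite vc_dist.
have /orP [//|Ecv] := short_adjacent vc vc_lt.
have /andP [_ Euv] := Hc _ _ _ (cw_rotate (cw_rotate cw_uvc)) Ecv.
by rewrite Euv in nEuv.
Qed.

(* If alpha >= 2, the predecessor z of u gives the new induced path
   z -> u -> v, which is not the reflection of any destroyed path. *)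
Lemma gained_extra : 1 < alpha -> (shift u n.-1, u, v) \in P3set E' :\: P3set E.
Proof.
have [_ [_ Hc]] := HE; have [uv nEuv _] := uv_nonedge; have [a_pos a_half] := alpha_half.
move=> a_gt1; set z := shift u n.-1.
have n1_lt : n.-1 < n by lia.
have uz : u != z by apply: shift_neq; lia.
have zu_dist : cdist z u = 1 by have := cdist_sym uz; rewrite cdist_shift //; lia.
have cw_zuv : cw z u v.
  by rewrite cwE zu_dist /=; have := cdist_add z u v; have := cdist_lt z v; lia.
apply: gained_before => //.
have zu_lt : cdist z u < alpha by rewrite zu_dist.
have zu : z != u by rewrite eq_sym.
have /orP [//|Euz] := short_adjacent zu zu_lt.
by have /andP [Euv _] := Hc _ _ _ (cw_rotate cw_zuv) Euz; rewrite Euv in nEuv.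
Qed.

(* If alpha = 1 and v is not isolated, some induced path is created: v has
   no in-neighbour (it would also point to u), so v has an out-neighbour. *)
Lemma gained_alpha1 : alpha <= 1 -> ~~ isolated E v ->
  exists g, g \in P3set E' :\: P3set E.
Proof.
have [Hl [_ Hc]] := HE; have [uv nEuv nEvu] := uv_nonedge; have [a_pos _] := alpha_half.
move=> a_le1; rewrite negb_forall => /existsP [x]; rewrite negb_and !negbK.
case/orP => [Evx|Exv].
  exists (u, v, x); apply: gained_after => //.
  have ux : u != x by apply: contraTneq Evx => <-.
  have vx : v != x by apply: contraTneq Evx => <-; rewrite (negbTE (Hl v)).
  have ne : cdist u x != alpha by apply: contra vx => /eqP /cdist_inj ->.
  by rewrite cwE a_pos /=; move: ne; rewrite -cdist_gt0 in ux; lia.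
have xu : x != u by apply: contraTneq Exv => ->.
have xv : x != v by apply: contraTneq Exv => ->; rewrite (negbTE (Hl v)).
have cw_xuv : cw x u v.
  rewrite cwE cdist_gt0 xu /=; rewrite -cdist_gt0 in xv.
  by have := cdist_add x u v; have := cdist_lt x u; lia.
by have /andP [_ Euv] := Hc _ _ _ cw_xuv Exv; rewrite Euv in nEuv.
Qed.

(* Counting: reflection injects the destroyed paths into the created ones,
   and one created path is left over. *)
Lemma lost_lt_gained :
  ~~ isolated E v -> #|P3set E :\: P3set E'| < #|P3set E' :\: P3set E|.
Proof.
move=> niso; pose f (t : 'I_n * 'I_n * 'I_n) := (u, v, mirror t.1.2).
have f_inj : {in P3set E :\: P3set E' &, injective f}.
  move=> t1 t2 /lost_shape [-> _] /lost_shape [-> _] /(congr1 (fun t => t.2)).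
  by move=> /= /mirror_inj ->.
have [g gG fG] : exists2 g, g \in P3set E' :\: P3set E &
    forall t, t \in P3set E :\: P3set E' -> f t \in (P3set E' :\: P3set E) :\ g.
  case: (leqP alpha 1) => a_le1.
    have [g gG] := gained_alpha1 a_le1 niso.
    by exists g => // t /lost_shape [_]; lia.
  exists (shift u n.-1, u, v); first exact: gained_extra.
  move=> t /lost_shape [_ b_range]; rewrite in_setD1 gained_mirror // andbT.
  have [_ a_half] := alpha_half.
  have uz : u != shift u n.-1 by apply: shift_neq; lia.
  by apply: contra_neq uz; case.
exact: card_lt_inj f_inj fG gG.
Qed.

End NoReturnPath.
End ShortestNonedge.

Theorem mainTheorem7 (n : nat) (hn : 4 <= n) (E : rel 'I_n) (u v : 'I_n) :
  optimal E -> shortest_nonedge E u v ->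
  exists w : 'I_n, E v w && E w u.
Proof.
move=> Hopt Hsn; case: (pickP (fun w => E v w && E w u)) => [w hw|none]; first by exists w.
exfalso; have HE := Hopt.1.
have no_return w : ~~ (E v w && E w u) by rewrite none.
have niso : ~~ isolated E v := optimal_no_isolated (ltnW hn) v Hopt.
apply: (optimal_P3_max Hopt (add_uv_valid HE Hsn)); apply: P3_lt.
exact: lost_lt_gained HE Hsn no_return niso.
Qed.
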